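(* Let $n\in\mathbb N$ with $n\ge 8$ and $i\in\{1,2\}$. Then $r(T_n^i,T_n')=r(T_n^i,T_n^* )=2n-5$.
   Context: All graphs are finite and simple; a graph ''contains'' $H$ if it has a subgraph isomorphic to $H$. For graphs $G_1,G_2$, the Ramsey number $r(G_1,G_2)$ is the smallest positive integer $N$ such that for every graph $G$ on $N$ vertices, either $G$ contains a copy of $G_1$ or the complement $\overline G$ contains a copy of $G_2$. For $n\ge 5$, $T_n^1$ is the tree with vertex set $\{v_0,\ldots,v_{n-1}\}$ and edges $v_0v_1,\ldots,v_0v_{n-3},v_{n-4}v_{n-2},v_{n-3}v_{n-1}$, and $T_n^2$ is the tree on the same vertex set with edges $v_0v_1,\ldots,v_0v_{n-3},v_{n-3}v_{n-2},v_{n-3}v_{n-1}$. For $n\ge 4$, $T_n'$ is the unique (up to isomorphism) tree on $n$ vertices with maximum degree $n-2$, and $T_n^*$ is the tree on $\{v_0,\ldots,v_{n-1}\}$ with edges $v_0v_1,\ldots,v_0v_{n-3},v_{n-3}v_{n-2},v_{n-2}v_{n-1}$. *)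

From mathcomp Require Import all_boot.
Set Implicit Arguments. Unset Strict Implicit. Unset Printing Implicit Defensive.

Definition simple_graph (N : nat) (e : rel 'I_N) : Prop :=
  symmetric e /\ irreflexive e.

Definition compl (N : nat) (e : rel 'I_N) : rel 'I_N :=
  fun x y => (x != y) && ~~ e x y.

Definition contains (N k : nat) (G : rel 'I_N) (H : rel 'I_k) : Prop :=
  exists f : 'I_k -> 'I_N, injective f /\ forall x y, H x y -> G (f x) (f y).

Definition ramsey_prop (k1 k2 : nat) (H1 : rel 'I_k1) (H2 : rel 'I_k2)
  (N : nat) : Prop :=
  forall G : rel 'I_N, simple_graph G -> contains G H1 \/ contains (compl G) H2.

Definition ramsey_number_is (k1 k2 : nat) (H1 : rel 'I_k1) (H2 : rel 'I_k2)
  (r : nat) : Prop :=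
  0 < r /\ ramsey_prop H1 H2 r /\
  (forall M, 0 < M -> M < r -> ~ ramsey_prop H1 H2 M).

Definition graph_of (n : nat) (E : nat -> nat -> bool) : rel 'I_n :=
  fun x y => E x y || E y x.
Arguments graph_of : clear implicits.

Definition T1_edges (n : nat) (a b : nat) : bool :=
  [|| (a == 0) && (1 <= b <= n - 3),
      (a == n - 4) && (b == n - 2) |
      (a == n - 3) && (b == n - 1)].

Definition T2_edges (n : nat) (a b : nat) : bool :=
  [|| (a == 0) && (1 <= b <= n - 3),
      (a == n - 3) && (b == n - 2) |
      (a == n - 3) && (b == n - 1)].

(* T_n': the tree with maximum degree n-2; representative:
   v0v1,...,v0v_{n-2}, v_{n-2}v_{n-1}. *)
Definition Tprime_edges (n : nat) (a b : nat) : bool :=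
  ((a == 0) && (1 <= b <= n - 2)) || ((a == n - 2) && (b == n - 1)).

Definition Tstar_edges (n : nat) (a b : nat) : bool :=
  [|| (a == 0) && (1 <= b <= n - 3),
      (a == n - 3) && (b == n - 2) |
      (a == n - 2) && (b == n - 1)].

Definition T1 (n : nat) : rel 'I_n := graph_of n (T1_edges n).
Arguments T1 : clear implicits.
Definition T2 (n : nat) : rel 'I_n := graph_of n (T2_edges n).
Arguments T2 : clear implicits.
Definition Tprime (n : nat) : rel 'I_n := graph_of n (Tprime_edges n).
Arguments Tprime : clear implicits.
Definition Tstar (n : nat) : rel 'I_n := graph_of n (Tstar_edges n).
Arguments Tstar : clear implicits.

Definition Ti (i n : nat) : rel 'I_n := if i == 1 then T1 n else T2 n.
Arguments Ti : clear implicits.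

From mathcomp Require Import all_boot zify.
Set Implicit Arguments. Unset Strict Implicit. Unset Printing Implicit Defensive.

(* All four trees are "spiders": a star centred at v_0 with m
   leaves, plus a tree on v_0 and the last few vertices.  Such a tree embeds
   in a graph as soon as its small part is present and the image of v_0 has
   m further neighbours (contains_spider_set); this yields one criterion per
   tree (contains_T1, ..., contains_Tstar).

   On M <= 2n - 6 vertices take two disjoint cliques of size at
   most n - 3.  A copy of T_n^i would be connected, hence inside one clique;
   the complement is complete bipartite with sides of size at most n - 3, and
   both T_n' and T_n^* have n - 2 vertices in one colour class.  Both facts
   follow by propagating a side label from the root along parent edges
   (rooted_labels).

   Let G have 2n - 5 vertices.  If G has six vertices of degree
   at most 3, or if its maximum degree is at most n - 2 while some degree is
   below n - 3, we build a path v u w x in the complement whose first vertex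
   has many complement neighbours, hence both T_n' and T_n^* in the
   complement (trees_of_path).  Otherwise G has a vertex of degree >= n - 1,
   a vertex of degree n - 2 with all degrees >= n - 3, or it is
   (n - 3)-regular, and in each case G contains T_n^1 and T_n^2. *)

Definition nb N (g : rel 'I_N) (v : 'I_N) : {set 'I_N} := [set x | g v x].

Local Notation deg g v := #|nb g v|.

(* Linear arithmetic in which cardinalities are atoms.  Non-arithmetic
   hypotheses are cleared (they only slow lia down), and cardinals that differ
   by an invisible [reverse_coercion] are identified first. *)
Ltac arith :=
  unfold reverse_coercion in *;
  repeat match goal with
  | H : ?T |- _ => match T with
                   | is_true (leq _ _) => fail 1
                   | @eq nat _ _ => fail 1
                   | _ => clear H
                   end
  end;
  repeat match goal with H : context [card _] |- _ => revert H end;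
  repeat match goal with |- context [card ?A] => let k := fresh "k" in progress set k := card A end;
  intros; lia.

Lemma edge_neq N (g : rel 'I_N) x y : irreflexive g -> g x y -> x != y.
Proof. by move=> ig; apply: contraTneq => ->; rewrite ig. Qed.

(* Proves [uniq [:: x1; ...; xk]] from hypotheses [xi != xj] and edges
   [g xi xj] of the loopless symmetric graph g. *)
Ltac distinct ig sg :=
  rewrite /= !inE !negb_or ?andbT; repeat (apply/andP; split);
  first [ done | by rewrite eq_sym | by apply: (edge_neq ig) | by apply: (edge_neq ig); rewrite sg
        | by rewrite eq_sym; apply: (edge_neq ig) | by rewrite eq_sym; apply: (edge_neq ig); rewrite sg ].


Lemma compl_simple N (e : rel 'I_N) : symmetric e -> simple_graph (compl e).
Proof. by move=> se; split=> [x y|x]; rewrite /compl ?eqxx // se eq_sym. Qed.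

Lemma deg_compl N (e : rel 'I_N) v : irreflexive e -> deg e v + deg (compl e) v = N - 1.
Proof.
move=> ie; have -> : nb (compl e) v = ~: nb e v :\ v.
  by apply/setP => x; rewrite !inE /compl eq_sym.
have := cardsC (nb e v); have := cardsD1 v (~: nb e v).
by rewrite !inE ie card_ord /=; arith.
Qed.

Lemma exists_outside (T : finType) (A : {set T}) (s : seq T) :
  size s < #|A| -> exists2 x, x \in A & x \notin s.
Proof.
move=> sA; apply/subsetPn; apply: contraTN sA => /subset_leq_card As.
by rewrite -leqNgt (leq_trans As (card_size s)).
Qed.

Lemma card_setD_seq (T : finType) (A : {set T}) (s : seq T) :
  #|A| <= #|A :\: [set x in s]| + count (mem A) s.
Proof.
rewrite -{1}(cardsID [set x in s] A) addnC leq_add2l -size_filter.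
have -> : A :&: [set x in s] = [set x in filter (mem A) s].
  by apply/setP => x; rewrite !inE mem_filter andbC.
by rewrite cardsE card_size.
Qed.

Lemma card_setD_size (T : finType) (A : {set T}) (s : seq T) :
  #|A| <= #|A :\: [set x in s]| + size s.
Proof. by apply: leq_trans (card_setD_seq A s) _; rewrite leq_add2l count_size. Qed.

Lemma common_neighbour N (g : rel 'I_N) x y : symmetric g -> irreflexive g ->
  x != y -> ~~ g x y -> N < deg g x + deg g y + 2 -> exists2 z, g x z & g y z.
Proof.
move=> sg ig xy nxy hdeg.
have sub : nb g x :|: nb g y \subset [set: 'I_N] :\ x :\ y.
  apply/subsetP => z; rewrite !inE andbT => /orP[] gz; apply/andP; split.
  - by apply: contraNneq nxy => <-.
  - by rewrite eq_sym (edge_neq ig gz).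
  - by rewrite eq_sym (edge_neq ig gz).
  - by apply: contraNneq nxy => <-; rewrite sg.
have [z] : exists z, z \in nb g x :&: nb g y.
  apply/card_gt0P; have := subset_leq_card sub; rewrite cardsU.
  have := cardsD1 x [set: 'I_N]; have := cardsD1 y ([set: 'I_N] :\ x).
  by rewrite !inE eq_sym xy cardsT card_ord /=; arith.
by rewrite !inE => /andP[]; exists z.
Qed.

Lemma contains_of_seq N n (g : rel 'I_N) (E : nat -> nat -> bool) (x0 : 'I_N) (w : seq 'I_N) :
  symmetric g -> uniq w -> size w = n ->
  (forall x y, E x y -> g (nth x0 w x) (nth x0 w y)) ->
  contains g (graph_of n E).
Proof.
move=> sg uw sw hE; exists (fun j : 'I_n => nth x0 w j); split.
  by move=> i j /eqP; rewrite nth_uniq ?sw // => /eqP/val_inj.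
by move=> x y /orP[] /hE //; rewrite sg.
Qed.

(* A spider is embedded by listing its centre a, then the images ls of its m
   star leaves, then the images sp of its remaining vertices: a vertex
   0 < j <= m goes to a leaf, and j = 0 or j > m goes to entry j - m of
   a :: sp. *)
Section Spider.
Variables (N m : nat) (g : rel 'I_N) (a : 'I_N) (ls sp : seq 'I_N).
Hypothesis size_ls : size ls = m.

Let w := a :: ls ++ sp.

Lemma nth_leaf x : 0 < x <= m -> nth a w x \in ls.
Proof.
case: x => // x /= xm; rewrite nth_cat size_ls xm.
by apply: mem_nth; rewrite size_ls.
Qed.

Lemma nth_core x : (x == 0) || (m < x) -> nth a w x = nth a (a :: sp) (x - m).
Proof.
case: x => [|x] //= mx.
by rewrite nth_cat size_ls ltnNge -ltnS mx subSn.
Qed.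

Lemma contains_spider n (E : nat -> nat -> bool) (S : seq (nat * nat)) :
  symmetric g -> uniq w -> n = m + (size sp).+1 ->
  {in ls, forall x, g a x} ->
  (forall i j, (i, j) \in S -> g (nth a (a :: sp) i) (nth a (a :: sp) j)) ->
  (forall x y, E x y -> ((x == 0) && (0 < y <= m)) ||
     [&& (x == 0) || (m < x), (y == 0) || (m < y) & (x - m, y - m) \in S]) ->
  contains g (graph_of n E).
Proof.
move=> sg uw hn hls hS hE; apply: (contains_of_seq (x0 := a) sg uw).
  by rewrite /w /= size_cat size_ls hn addnS.
move=> x y /hE /orP[/andP[/eqP-> /nth_leaf/hls //] | /and3P[cx cy hxy]].
by rewrite !nth_core //; apply: hS.
Qed.

End Spider.

(* The list S describes the small part of the tree in
   the local numbering of a :: sp; every edge of E is either a star edge or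
   an edge of S after shifting by m. *)
Lemma contains_spider_set N n m (g : rel 'I_N) (E : nat -> nat -> bool) a (sp : seq 'I_N)
    (L : {set 'I_N}) (S : seq (nat * nat)) :
  symmetric g -> uniq (a :: sp) -> all [predC L] (a :: sp) -> L \subset nb g a ->
  m <= #|L| -> n = m + (size sp).+1 ->
  (forall i j, (i, j) \in S -> g (nth a (a :: sp) i) (nth a (a :: sp) j)) ->
  (forall x y, E x y -> ((x == 0) && (0 < y <= m)) ||
     [&& (x == 0) || (m < x), (y == 0) || (m < y) & (x - m, y - m) \in S]) ->
  contains g (graph_of n E).
Proof.
move=> sg; rewrite cons_uniq /= => /andP[asp usp] /andP[aL spL] sLa mL hn.
set ls := take m (enum L).
have size_ls : size ls = m by rewrite size_take -cardE; case: ltngtP mL.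
have lsL : {subset ls <= L} by move=> x /mem_take; rewrite mem_enum.
apply: (contains_spider size_ls) => //; last first.
  by move=> x /lsL /(subsetP sLa); rewrite inE.
rewrite /= mem_cat negb_or asp cat_uniq usp take_uniq ?enum_uniq //= andbT.
rewrite (contra (@lsL a)) //= andbT; apply/hasPn => x xsp.
by apply: contra (allP spL x xsp); apply: lsL.
Qed.

(* The four trees as spiders: T_n^1 has centre a, branches a-b-c and
   a-b'-c'; T_n^2 has centre a and a vertex b with two extra neighbours c, d;
   T_n' is a star with one subdivided edge v-u-w; T_n^* is a star with an
   attached path v-u-w-x. *)
Lemma contains_T1 N n (g : rel 'I_N) a b b' c c' (L : {set 'I_N}) :
  5 <= n -> symmetric g -> g a b -> g a b' -> g b c -> g b' c' ->
  uniq [:: a; b; b'; c; c'] -> all [predC L] [:: a; b; b'; c; c'] ->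
  L \subset nb g a -> n - 5 <= #|L| -> contains g (T1 n).
Proof.
move=> n5 sg gab gab' gbc gb'c' u hL sL mL; rewrite /T1.
apply: (contains_spider_set (S := [:: (0, 1); (0, 2); (1, 3); (2, 4)]) sg u hL sL mL).
- by rewrite /=; lia.
- by move=> i j; rewrite !inE !xpair_eqE => /or4P[] /andP[/eqP-> /eqP->].
- by move=> x y; rewrite /T1_edges !inE !xpair_eqE; lia.
Qed.

Lemma contains_T2 N n (g : rel 'I_N) a b c d (L : {set 'I_N}) :
  4 <= n -> symmetric g -> g a b -> g b c -> g b d ->
  uniq [:: a; b; c; d] -> all [predC L] [:: a; b; c; d] ->
  L \subset nb g a -> n - 4 <= #|L| -> contains g (T2 n).
Proof.
move=> n4 sg gab gbc gbd u hL sL mL; rewrite /T2.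
apply: (contains_spider_set (S := [:: (0, 1); (1, 2); (1, 3)]) sg u hL sL mL).
- by rewrite /=; lia.
- by move=> i j; rewrite !inE !xpair_eqE => /or3P[] /andP[/eqP-> /eqP->].
- by move=> x y; rewrite /T2_edges !inE !xpair_eqE; lia.
Qed.

Lemma contains_Tprime N n (g : rel 'I_N) v u w (L : {set 'I_N}) :
  3 <= n -> symmetric g -> g v u -> g u w ->
  uniq [:: v; u; w] -> all [predC L] [:: v; u; w] ->
  L \subset nb g v -> n - 3 <= #|L| -> contains g (Tprime n).
Proof.
move=> n3 sg gvu guw uq hL sL mL; rewrite /Tprime.
apply: (contains_spider_set (S := [:: (0, 1); (1, 2)]) sg uq hL sL mL).
- by rewrite /=; lia.
- by move=> i j; rewrite !inE !xpair_eqE => /orP[] /andP[/eqP-> /eqP->].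
- by move=> x y; rewrite /Tprime_edges !inE !xpair_eqE; lia.
Qed.

Lemma contains_Tstar N n (g : rel 'I_N) v u w x (L : {set 'I_N}) :
  4 <= n -> symmetric g -> g v u -> g u w -> g w x ->
  uniq [:: v; u; w; x] -> all [predC L] [:: v; u; w; x] ->
  L \subset nb g v -> n - 4 <= #|L| -> contains g (Tstar n).
Proof.
move=> n4 sg gvu guw gwx uq hL sL mL; rewrite /Tstar.
apply: (contains_spider_set (S := [:: (0, 1); (1, 2); (2, 3)]) sg uq hL sL mL).
- by rewrite /=; lia.
- by move=> i j; rewrite !inE !xpair_eqE => /or3P[] /andP[/eqP-> /eqP->].
- by move=> y z; rewrite /Tstar_edges !inE !xpair_eqE; lia.
Qed.

Lemma trees_of_path N n (h : rel 'I_N) v u w x :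
  4 <= n -> symmetric h -> irreflexive h -> h v u -> h u w -> h w x ->
  uniq [:: v; u; w; x] ->
  n - 3 <= #|nb h v :\: [set y in [:: u; w]]| ->
  n - 4 <= #|nb h v :\: [set y in [:: u; w; x]]| ->
  contains h (Tprime n) /\ contains h (Tstar n).
Proof.
move=> n4 sh ih hvu huw hwx uq c3 c4; split.
- apply: (contains_Tprime _ sh hvu huw (take_uniq 3 uq) _ (subsetDl _ _) c3); first lia.
  by rewrite /= !inE ih !eqxx ?orbT !andbF.
- apply: (contains_Tstar n4 sh hvu huw hwx uq _ (subsetDl _ _) c4).
  by rewrite /= !inE ih !eqxx ?orbT !andbF.
Qed.

Lemma rooted_labels n (E : nat -> nat -> bool) (flip : bool) (d : nat -> bool)
    (lab : 'I_n -> bool) :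
  (forall j, 0 < j < n -> exists2 p, p < j & E p j /\ d j = d p (+) flip) ->
  (forall x y : 'I_n, E x y -> lab y = lab x (+) flip) ->
  forall z j : 'I_n, z = 0 :> nat -> lab j (+) d j = lab z (+) d 0.
Proof.
move=> hpar hlab z j z0.
suff IH k : forall j : 'I_n, j <= k -> lab j (+) d j = lab z (+) d 0 by exact: IH.
elim: k => [|k IH] {}j jk.
  have -> : j = z by apply: ord_inj; rewrite z0; lia.
  by rewrite z0.
have [|jk'] := leqP j k; first exact: IH.
have [p pj [Epj ->]] : exists2 p, p < j & E p j /\ d j = d p (+) flip.
  by apply: hpar; rewrite ltn_ord andbT; lia.
have pn : p < n by apply: ltn_trans pj _.
rewrite (hlab (Ordinal pn) j Epj) addbACA addbb addbF.
by apply: (IH (Ordinal pn)) => /=; lia.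
Qed.

(* The extremal graph for the lower bound: on M vertices, the two cliques
   {x < c} and {x >= c}. *)
Definition two_cliques (M c : nat) : rel 'I_M :=
  fun x y => (x != y) && ((x < c) == (y < c)).
Arguments two_cliques : clear implicits.

Lemma two_cliques_simple M c : simple_graph (two_cliques M c).
Proof.
split; first by move=> x y; rewrite /two_cliques eq_sym (eq_sym (x < c)).
by move=> x; rewrite /two_cliques eqxx.
Qed.

Lemma card_ord_range M lo hi : #|[set x : 'I_M | lo <= x < hi]| <= hi - lo.
Proof.
rewrite cardE -(size_map val) -(size_iota lo (hi - lo)); apply: uniq_leq_size.
  by rewrite map_inj_uniq ?enum_uniq //; apply: val_inj.
move=> y /mapP[x]; rewrite mem_enum inE => /andP[lox xhi] ->; rewrite mem_iota.
by rewrite lox /=; lia.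
Qed.

Lemma card_side M c b : M <= 2 * c -> #|[set x : 'I_M | (x < c) == b]| <= c.
Proof.
move=> hM; case: b.
  have sub : [set x : 'I_M | (x < c) == true] \subset [set x : 'I_M | 0 <= x < c].
    by apply/subsetP => x; rewrite !inE eqb_id.
  by have := subset_leq_card sub; have := card_ord_range M 0 c; lia.
have sub : [set x : 'I_M | (x < c) == false] \subset [set x : 'I_M | c <= x < M].
  by apply/subsetP => x; rewrite !inE ltn_ord andbT eqbF_neg -leqNgt.
by have := subset_leq_card sub; have := card_ord_range M c M; lia.
Qed.

Lemma one_side_bound M c n (f : 'I_n -> 'I_M) (P : {set 'I_n}) b :
  M <= 2 * c -> injective f -> {in P, forall j, (f j < c) = b} -> #|P| <= c.
Proof.
move=> hM fi hP; rewrite -(card_imset P fi).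
apply: leq_trans (card_side b hM); apply: subset_leq_card.
by apply/subsetP => _ /imsetP[j jP ->]; rewrite inE hP.
Qed.

(* A tree with more than c vertices does not fit in two cliques of size <= c:
   its vertices all lie on the side of the root. *)
Lemma no_tree_in_two_cliques M c n (E : nat -> nat -> bool) :
  M <= 2 * c -> c < n ->
  (forall j, 0 < j < n -> exists2 p, p < j & E p j) ->
  ~ contains (two_cliques M c) (graph_of n E).
Proof.
move=> hM cn hpar [f [fi hf]].
have n0 : 0 < n by lia.
pose z := Ordinal n0.
have hlab (x y : 'I_n) : E x y -> (f y < c) = (f x < c) (+) false.
  by move=> Exy; have /andP[_ /eqP->] := hf x y (introT orP (or_introl Exy)); rewrite addbF.
have same : {in [set: 'I_n], forall j, (f j < c) = (f z < c)}.
  move=> j _; have := @rooted_labels n E false (fun _ => false) _ _ hlab z j erefl.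
  by rewrite !addbF; apply=> k /hpar[p pk Epk]; exists p.
by have := one_side_bound hM fi same; rewrite cardsT card_ord; lia.
Qed.

(* The complement of two_cliques is complete bipartite.  A rooted tree in it
   puts all vertices of odd parity d on the side opposite to the root, so
   it does not embed if more than c vertices have odd parity. *)
Lemma no_tree_in_bipartite M c n (E : nat -> nat -> bool) (d : nat -> bool) :
  M <= 2 * c -> d 0 = false -> c < #|[set j : 'I_n | d j]| ->
  (forall j, 0 < j < n -> exists2 p, p < j & E p j /\ d j = ~~ d p) ->
  ~ contains (compl (two_cliques M c)) (graph_of n E).
Proof.
move=> hM d0 cd hpar [f [fi hf]].
have [j0 _] : exists j, j \in [set j : 'I_n | d j] by apply/card_gt0P; lia.
have n0 : 0 < n := leq_ltn_trans (leq0n _) (ltn_ord j0).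
pose z := Ordinal n0.
have opp : {in [set j : 'I_n | d j], forall j, (f j < c) = ~~ (f z < c)}.
  move=> j; rewrite inE => dj.
  have := @rooted_labels n E true d (fun j => f j < c) _ _ z j erefl.
  rewrite dj d0 addbT addbF => <-; first by rewrite negbK.
    by move=> k /hpar[p pk [Epk ->]]; exists p; rewrite ?addbT.
  move=> x y Exy; move: (hf x y (introT orP (or_introl Exy))).
  by rewrite /compl /two_cliques => /andP[-> /=]; rewrite addbT; case: (_ < c); case: (_ < c).
by move: (one_side_bound hM fi opp) => /(leq_trans cd); rewrite ltnn.
Qed.

Lemma card_all_but_two n k : 0 < k < n ->
  #|[set j : 'I_n | (j != 0 :> nat) && (j != k :> nat)]| = n - 2.
Proof.
move=> /andP[k0 kn]; pose z := Ordinal (ltn_trans k0 kn); pose q := Ordinal kn.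
have -> : [set j : 'I_n | (j != 0 :> nat) && (j != k :> nat)] = [set: 'I_n] :\ z :\ q.
  by apply/setP => j; rewrite !inE andbT andbC.
have := cardsD1 q ([set: 'I_n] :\ z); have := cardsD1 z [set: 'I_n].
by rewrite !inE cardsT card_ord -val_eqE /= andbT -lt0n k0 /=; arith.
Qed.

Lemma T1_rooted n : 5 <= n -> forall j, 0 < j < n -> exists2 p, p < j & T1_edges n p j.
Proof.
move=> n5 j hj; rewrite /T1_edges.
have [hj'|[->|->]] : j <= n - 3 \/ j = n - 2 \/ j = n - 1 by lia.
- by exists 0; lia.
- by exists (n - 4); lia.
- by exists (n - 3); lia.
Qed.

Lemma T2_rooted n : 4 <= n -> forall j, 0 < j < n -> exists2 p, p < j & T2_edges n p j.
Proof.
move=> n4 j hj; rewrite /T2_edges.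
have [hj'|[->|->]] : j <= n - 3 \/ j = n - 2 \/ j = n - 1 by lia.
- by exists 0; lia.
- by exists (n - 3); lia.
- by exists (n - 3); lia.
Qed.

Lemma Tprime_rooted n : 3 <= n -> forall j, 0 < j < n -> exists2 p, p < j &
  Tprime_edges n p j /\ ((j != 0) && (j != n - 1)) = ~~ ((p != 0) && (p != n - 1)).
Proof.
move=> n3 j hj; rewrite /Tprime_edges.
have [hj'|->] : j <= n - 2 \/ j = n - 1 by lia.
- by exists 0; lia.
- by exists (n - 2); lia.
Qed.

Lemma Tstar_rooted n : 4 <= n -> forall j, 0 < j < n -> exists2 p, p < j &
  Tstar_edges n p j /\ ((j != 0) && (j != n - 2)) = ~~ ((p != 0) && (p != n - 2)).
Proof.
move=> n4 j hj; rewrite /Tstar_edges.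
have [hj'|[->|->]] : j <= n - 3 \/ j = n - 2 \/ j = n - 1 by lia.
- by exists 0; lia.
- by exists (n - 3); lia.
- by exists (n - 2); lia.
Qed.

Lemma lower_bound M n i : 8 <= n -> M < 2 * n - 5 ->
  [/\ ~ contains (two_cliques M (n - 3)) (Ti i n),
      ~ contains (compl (two_cliques M (n - 3))) (Tprime n) &
      ~ contains (compl (two_cliques M (n - 3))) (Tstar n)].
Proof.
move=> n8 hM; have hM' : M <= 2 * (n - 3) by lia.
split.
- rewrite /Ti; case: (i == 1); (apply: no_tree_in_two_cliques hM' _ _; first lia).
    by apply: T1_rooted; lia.
  by apply: T2_rooted; lia.
- apply: (no_tree_in_bipartite (d := fun j => (j != 0) && (j != n - 1))) hM' _ _ _ => //.
    by rewrite card_all_but_two; lia.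
  by apply: Tprime_rooted; lia.
- apply: (no_tree_in_bipartite (d := fun j => (j != 0) && (j != n - 2))) hM' _ _ _ => //.
    by rewrite card_all_but_two; lia.
  by apply: Tstar_rooted; lia.
Qed.

Section UpperBound.
Variables (N n : nat) (e : rel 'I_N).
Hypotheses (n8 : 8 <= n) (hN : N = 2 * n - 5) (se : symmetric e) (ie : irreflexive e).

Let sc : symmetric (compl e) := proj1 (compl_simple se).
Let ic : irreflexive (compl e) := proj2 (compl_simple se).

Lemma deg_compl_N v : deg (compl e) v = 2 * n - 6 - deg e v.
Proof. by have := deg_compl v ie; arith. Qed.

(* Six vertices of degree at most 3 give a complement path y1 y2 z x with y1,
   y2, z of small degree, and y1 has at least 2n - 9 complement neighbours. *)
Lemma many_low_degree : 5 < #|[set y | deg e y <= 3]| ->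
  contains (compl e) (Tprime n) /\ contains (compl e) (Tstar n).
Proof.
set Y := [set y | _] => hY; have dY y : y \in Y -> deg e y <= 3 by rewrite inE.
have [y1 y1Y] : exists y1, y1 \in Y by apply/card_gt0P; arith.
have [y2 y2Y] : exists2 y2, y2 \in Y & y2 \notin y1 :: enum (nb e y1).
  by apply: exists_outside; rewrite /= -cardE; have := dY _ y1Y; arith.
rewrite in_cons mem_enum inE negb_or => /andP[y21 ny12].
have [z zY] : exists2 z, z \in Y & z \notin [:: y1, y2 & enum (nb e y2)].
  by apply: exists_outside; rewrite /= -cardE; have := dY _ y2Y; arith.
rewrite !in_cons mem_enum inE !negb_or => /and3P[zy1 zy2 ny2z].
have [x czx] : exists2 x, x \in nb (compl e) z & x \notin [:: y1; y2].
  by apply: exists_outside; rewrite deg_compl_N /=; have := dY _ zY; arith.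
rewrite !inE negb_or in czx * => /andP[xy1 xy2].
have c12 : compl e y1 y2 by rewrite /compl eq_sym y21.
have c2z : compl e y2 z by rewrite /compl eq_sym zy2.
apply: (trees_of_path _ sc ic c12 c2z czx); first arith.
- by distinct ic sc.
- have := card_setD_size (nb (compl e) y1) [:: y2; z].
  by rewrite deg_compl_N /=; have := dY _ y1Y; arith.
- have := card_setD_size (nb (compl e) y1) [:: y2; z; x].
  by rewrite deg_compl_N /=; have := dY _ y1Y; arith.
Qed.

(* If all degrees are at most n - 2 and v has degree below n - 3, then v has
   at least n - 2 complement neighbours.  A complement path v u w x exists:
   when v is isolated in G, by following complement edges; otherwise through
   a common complement neighbour u of v and a G-neighbour r of v. *)
Lemma degree_gap v : (forall u, deg e u <= n - 2) -> deg e v < n - 3 ->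
  contains (compl e) (Tprime n) /\ contains (compl e) (Tstar n).
Proof.
move=> hmax hv; have [d0|] := posnP (deg e v).
- have [u cvu] : exists u, u \in nb (compl e) v.
    by apply/card_gt0P; rewrite deg_compl_N; arith.
  have [w cuw] : exists2 w, w \in nb (compl e) u & w \notin [:: v].
    by apply: exists_outside; rewrite deg_compl_N /=; have := hmax u; arith.
  have [x cwx] : exists2 x, x \in nb (compl e) w & x \notin [:: v; u].
    by apply: exists_outside; rewrite deg_compl_N /=; have := hmax w; arith.
  rewrite !inE ?negb_or in cvu cuw cwx * => /andP[xv xu] wv.
  apply: (trees_of_path _ sc ic cvu cuw cwx); first arith.
  + by distinct ic sc.
  + have := card_setD_size (nb (compl e) v) [:: u; w].
    by rewrite deg_compl_N /=; arith.
  + have := card_setD_size (nb (compl e) v) [:: u; w; x].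
    by rewrite deg_compl_N /=; arith.
- case/card_gt0P => r; rewrite inE => evr.
  have ncvr : compl e v r = false by rewrite /compl evr andbF.
  have [u cvu cru] : exists2 u, compl e v u & compl e r u.
    apply: common_neighbour sc ic (edge_neq ie evr) _ _; first by rewrite ncvr.
    by rewrite !deg_compl_N; have := hmax r; arith.
  have [x crx] : exists2 x, x \in nb (compl e) r & x \notin [:: u].
    by apply: exists_outside; rewrite deg_compl_N /=; have := hmax r; arith.
  rewrite !inE in crx * => xu.
  have vr : v != r := edge_neq ie evr.
  have vx : v != x by apply: contraTneq crx => <-; rewrite sc ncvr.
  apply: (trees_of_path _ sc ic cvu (_ : compl e u r) crx); first arith.
  + by rewrite sc.
  + by distinct ic sc.
  + have := card_setD_seq (nb (compl e) v) [:: u; r].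
    by rewrite deg_compl_N /= !inE cvu ncvr /=; arith.
  + have := card_setD_seq (nb (compl e) v) [:: u; r; x].
    rewrite deg_compl_N /= !inE cvu ncvr /=.
    by have := leq_b1 (compl e v x); arith.
Qed.

(* A vertex a of degree at least n - 1: at most five of its neighbours have
   degree at most 3, so two neighbours b, b' have degree at least 4, and the
   branches of T_n^1 and T_n^2 grow from them. *)
Lemma high_degree a : #|[set y | deg e y <= 3]| <= 5 -> n - 1 <= deg e a ->
  contains e (T1 n) /\ contains e (T2 n).
Proof.
set Y := [set y | _] => hY ha.
have [b eab] : exists2 b, b \in nb e a & b \notin enum Y.
  by apply: exists_outside; rewrite -cardE; arith.
rewrite mem_enum !inE -ltnNge in eab * => db.
have [b' eab'] : exists2 b', b' \in nb e a & b' \notin b :: enum Y.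
  by apply: exists_outside; rewrite /= -cardE; arith.
rewrite in_cons mem_enum !inE negb_or -ltnNge in eab' * => /andP[b'b db'].
split.
- have [c ebc] : exists2 c, c \in nb e b & c \notin [:: a; b'].
    by apply: exists_outside => /=; arith.
  rewrite !inE negb_or in ebc * => /andP[ca cb'].
  have [c' eb'c'] : exists2 c', c' \in nb e b' & c' \notin [:: a; b; c].
    by apply: exists_outside => /=; arith.
  rewrite !inE !negb_or in eb'c' * => /and3P[c'a c'b c'c].
  apply: (contains_T1 (L := nb e a :\: [set x in [:: b; b'; c; c']]) _ se eab eab' ebc eb'c').
  + by arith.
  + by distinct ie se.
  + by rewrite /= !inE ie !eqxx ?orbT !andbF.
  + exact: subsetDl.
  + by move: (card_setD_size (nb e a) [:: b; b'; c; c']) => /=; arith.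
- have [c ebc] : exists2 c, c \in nb e b & c \notin [:: a].
    by apply: exists_outside => /=; arith.
  rewrite !inE in ebc * => ca.
  have [d ebd] : exists2 d, d \in nb e b & d \notin [:: a; c].
    by apply: exists_outside => /=; arith.
  rewrite !inE negb_or in ebd * => /andP[da dc].
  apply: (contains_T2 (L := nb e a :\: [set x in [:: b; c; d]]) _ se eab ebc ebd).
  + by arith.
  + by distinct ie se.
  + by rewrite /= !inE ie !eqxx ?orbT !andbF.
  + exact: subsetDl.
  + by move: (card_setD_size (nb e a) [:: b; c; d]) => /=; arith.
Qed.

(* A vertex a of degree n - 2 when all degrees are at least n - 3: a
   non-neighbour c of a shares a neighbour b with a, and b-c is a branch
   leaving the neighbourhood of a. *)
Lemma degree_n_minus_2 a : (forall v, n - 3 <= deg e v) -> deg e a = n - 2 ->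
  contains e (T1 n) /\ contains e (T2 n).
Proof.
move=> hmin ha.
have [c] : exists c, c \in nb (compl e) a by apply/card_gt0P; rewrite deg_compl_N; arith.
rewrite inE => /andP[ac nac].
have [b eab ecb] : exists2 b, e a b & e c b.
  by apply: common_neighbour ac nac _ => //; have := hmin c; arith.
have ebc : e b c by rewrite se.
split.
- have [b' eab'] : exists2 b', b' \in nb e a & b' \notin [:: b].
    by apply: exists_outside => /=; arith.
  rewrite !inE in eab' * => b'b.
  have b'c : b' != c by apply: contraNneq nac => <-.
  have [c' eb'c'] : exists2 c', c' \in nb e b' & c' \notin [:: a; b; c].
    by apply: exists_outside => /=; have := hmin b'; arith.
  rewrite !inE !negb_or in eb'c' * => /and3P[c'a c'b c'c].
  apply: (contains_T1 (L := nb e a :\: [set x in [:: b; b'; c']]) _ se eab eab' ebc eb'c').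
  + by arith.
  + by distinct ie se.
  + by rewrite /= !inE ie !eqxx (negbTE nac) ?orbT !andbF.
  + exact: subsetDl.
  + by move: (card_setD_size (nb e a) [:: b; b'; c']) => /=; arith.
- have [d ebd] : exists2 d, d \in nb e b & d \notin [:: a; c].
    by apply: exists_outside => /=; have := hmin b; arith.
  rewrite !inE negb_or in ebd * => /andP[da dc].
  apply: (contains_T2 (L := nb e a :\: [set x in [:: b; d]]) _ se eab ebc ebd).
  + by arith.
  + by distinct ie se.
  + by rewrite /= !inE ie !eqxx (negbTE nac) ?orbT !andbF.
  + exact: subsetDl.
  + by move: (card_setD_size (nb e a) [:: b; d]) => /=; arith.
Qed.

(* The (n - 3)-regular case.  Fix a vertex a; its n - 3 neighbours and its
   n - 3 non-neighbours B partition the other vertices. *)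
Section Regular.
Hypothesis hreg : forall v, deg e v = n - 3.
Variable a : 'I_N.

Lemma regular_deg_compl : deg (compl e) a = n - 3.
Proof. by rewrite deg_compl_N hreg; arith. Qed.

Lemma regular_escape x : x \in nb (compl e) a -> exists2 b, e a b & e x b.
Proof.
rewrite inE => /andP[ax nax].
by apply: common_neighbour se ie ax nax _; rewrite !hreg; arith.
Qed.

(* T_n^1: two non-neighbours of a reaching a through different neighbours b1,
   b2 give it; otherwise b1 is adjacent to a and to all of B, so its degree
   exceeds n - 3. *)
Lemma regular_T1 : contains e (T1 n).
Proof.
have [x1 x1B] : exists x1, x1 \in nb (compl e) a.
  by apply/card_gt0P; rewrite regular_deg_compl; arith.
have [b1 eab1 ex1b1] := regular_escape x1B.
have /andP[ax1 nax1] : compl e a x1 by rewrite inE in x1B.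
case: (boolP [exists x2 in nb (compl e) a :\ x1, exists b2 in nb e a :\ b1, e x2 b2]).
- case/exists_inP => x2; rewrite !inE => /andP[x2x1 /andP[ax2 nax2]].
  case/exists_inP => b2; rewrite !inE => /andP[b2b1 eab2] ex2b2.
  have b1x2 : b1 != x2 by apply: contraNneq nax2 => <-.
  have b2x1 : b2 != x1 by apply: contraNneq nax1 => <-.
  apply: (contains_T1 (L := nb e a :\: [set x in [:: b1; b2]]) _ se eab1 eab2
            (_ : e b1 x1) (_ : e b2 x2)).
  + by arith.
  + by rewrite se.
  + by rewrite se.
  + by distinct ie se.
  + by rewrite /= !inE ie !eqxx (negbTE nax1) (negbTE nax2) ?orbT !andbF.
  + exact: subsetDl.
  + by move: (card_setD_size (nb e a) [:: b1; b2]) => /=; rewrite hreg; arith.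
- move=> noT1; exfalso.
  have sub : a |: nb (compl e) a \subset nb e b1.
    apply/subsetP => y; rewrite in_setU1 => /orP[/eqP->|yB]; first by rewrite inE se.
    rewrite inE; case: (eqVneq y x1) => [->|yx1]; first by rewrite se.
    have [b eab eyb] := regular_escape yB.
    case: (eqVneq b b1) => [<-|bb1]; first by rewrite se.
    case/negP: noT1; apply/exists_inP; exists y; first by rewrite in_setD1 yx1.
    by apply/exists_inP; exists b => //; rewrite !inE bb1.
  have := subset_leq_card sub; rewrite cardsU1 regular_deg_compl hreg.
  by rewrite inE ic /=; arith.
Qed.

Definition sparse_to_compl : Prop :=
  forall b y z, e a b -> e b y -> e b z ->
    y \in nb (compl e) a -> z \in nb (compl e) a -> y = z.

(* In the sparse case, if x1 in B reaches a through b1 and every further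
   neighbour of b1 is a neighbour of x1, then x1 sees n - 4 neighbours of a. *)
Lemma regular_near_x1 x1 b1 : sparse_to_compl ->
  x1 \in nb (compl e) a -> e a b1 -> e x1 b1 ->
  (forall y, e b1 y -> y != a -> y != x1 -> e x1 y) ->
  n - 4 <= #|nb e x1 :&: nb e a|.
Proof.
move=> uB x1B eab1 ex1b1 closed.
have sub : b1 |: (nb e b1 :\: [set x in [:: a; x1]]) \subset nb e x1 :&: nb e a.
  apply/subsetP => y; rewrite in_setU1 => /orP[/eqP->|]; first by rewrite !inE ex1b1 eab1.
  rewrite !inE negb_or => /andP[/andP[ya yx1] eb1y].
  rewrite closed //=; apply/negPn/negP => nay.
  have yB : y \in nb (compl e) a by rewrite inE /compl eq_sym ya nay.
  by move: yx1; rewrite (uB b1 x1 y eab1 _ eb1y x1B yB) ?eqxx // se.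
have := subset_leq_card sub; rewrite cardsU1 !inE ie andbF /=.
by move: (card_setD_size (nb e b1) [:: a; x1]) => /=; rewrite hreg; arith.
Qed.

(* ... which is impossible: two further vertices of B then reach a through
   the single neighbour of a not seen by x1, which would have two
   neighbours in B. *)
Lemma regular_sparse_not_closed x1 b1 : sparse_to_compl ->
  x1 \in nb (compl e) a -> e a b1 -> e x1 b1 ->
  ~ (forall y, e b1 y -> y != a -> y != x1 -> e x1 y).
Proof.
move=> uB x1B eab1 ex1b1 closed.
have bigP := regular_near_x1 uB x1B eab1 ex1b1 closed.
set P := nb e x1 :&: nb e a in bigP.
have smallD : #|nb e a :\: P| <= 1.
  by rewrite cardsD (setIidPr (subsetIr _ _)) hreg; arith.
have outP b x : e a b -> e x b -> x \in nb (compl e) a -> x != x1 -> b \in nb e a :\: P.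
  move=> eab exb xB xx1; rewrite !inE eab andbT; apply: contra xx1 => /andP[ex1b _].
  by rewrite (uB b x x1 eab _ _ xB x1B) // se.
have [x' x'B] : exists2 x', x' \in nb (compl e) a & x' \notin [:: x1].
  by apply: exists_outside => /=; rewrite regular_deg_compl; arith.
rewrite !inE => x'x1.
have [x'' x''B] : exists2 x'', x'' \in nb (compl e) a & x'' \notin [:: x1; x'].
  by apply: exists_outside => /=; rewrite regular_deg_compl; arith.
rewrite !inE negb_or => /andP[x''x1 x''x'].
have [b' eab' ex'b'] := regular_escape x'B.
have [b'' eab'' ex''b''] := regular_escape x''B.
move/card_le1_eqP: smallD => /(_ b' b'' (outP _ _ eab' ex'b' x'B x'x1)).
move=> /(_ (outP _ _ eab'' ex''b'' x''B x''x1)) eqb.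
have eb'x' : e b' x' by rewrite se.
have eb'x'' : e b' x'' by rewrite -eqb se.
by move: x''x'; rewrite (uB b' x' x'' eab' eb'x' eb'x'' x'B x''B) eqxx.
Qed.

(* So in the sparse case some neighbour y of b1 lies outside the closed
   neighbourhood of x1, and T_n^2 is centred at x1 with branch b1-a, b1-y. *)
Lemma regular_T2_sparse : sparse_to_compl -> contains e (T2 n).
Proof.
move=> uB.
have [x1 x1B] : exists x1, x1 \in nb (compl e) a.
  by apply/card_gt0P; rewrite regular_deg_compl; arith.
have [b1 eab1 ex1b1] := regular_escape x1B.
have /andP[ax1 nax1] : compl e a x1 by rewrite inE in x1B.
have nx1a : e x1 a = false by rewrite se (negbTE nax1).
case: (boolP [exists y in nb e b1, [&& y != a, y != x1 & ~~ e x1 y]]).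
- case/exists_inP => y; rewrite inE => eb1y /and3P[ya yx1 nx1y].
  apply: (contains_T2 (L := nb e x1 :\: [set x in [:: b1]]) _ se ex1b1 (_ : e b1 a) eb1y).
  + by arith.
  + by rewrite se.
  + by distinct ie se.
  + by rewrite /= !inE ie !eqxx nx1a (negbTE nx1y) ?orbT !andbF.
  + exact: subsetDl.
  + by move: (card_setD_size (nb e x1) [:: b1]) => /=; rewrite hreg; arith.
- move=> noT2; case: (regular_sparse_not_closed uB x1B eab1 ex1b1) => y eb1y ya yx1.
  apply/negPn; apply: contra noT2 => nx1y.
  by apply/exists_inP; exists y; rewrite ?inE // ya yx1 nx1y.
Qed.

(* T_n^2: a neighbour b of a with two neighbours in B gives it directly. *)
Lemma regular_T2 : contains e (T2 n).
Proof.
case: (boolP [exists b in nb e a, 1 < #|nb e b :&: nb (compl e) a|]).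
- case/exists_inP => b; rewrite inE => eab /card_gt1P[c [d [cB dB cd]]].
  move: cB dB; rewrite !inE => /andP[ebc /andP[ac nac]] /andP[ebd /andP[ad nad]].
  apply: (contains_T2 (L := nb e a :\: [set x in [:: b]]) _ se eab ebc ebd).
  + by arith.
  + by distinct ie se.
  + by rewrite /= !inE ie !eqxx (negbTE nac) (negbTE nad) ?orbT !andbF.
  + exact: subsetDl.
  + by move: (card_setD_size (nb e a) [:: b]) => /=; rewrite hreg; arith.
- move=> sparse; apply: regular_T2_sparse => b y z eab eby ebz yB zB.
  have : #|nb e b :&: nb (compl e) a| <= 1.
    by rewrite leqNgt; apply: contra sparse => h; apply/exists_inP; exists b; rewrite ?inE.
  by move/card_le1_eqP; apply; rewrite in_setI inE ?eby ?ebz.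
Qed.

End Regular.

Lemma upper_bound :
  (contains e (T1 n) /\ contains e (T2 n)) \/
  (contains (compl e) (Tprime n) /\ contains (compl e) (Tstar n)).
Proof.
have [hY|hY] := leqP #|[set y | deg e y <= 3]| 5; last by right; exact: many_low_degree.
case: (boolP [exists a, n - 1 <= deg e a]) => [/existsP[a ha]|/existsPn hmax].
  by left; exact: high_degree hY ha.
have {}hmax v : deg e v <= n - 2 by have := hmax v; rewrite -ltnNge; arith.
case: (boolP [exists v, deg e v < n - 3]) => [/existsP[v hv]|/existsPn hmin].
  by right; exact: degree_gap hmax hv.
have {}hmin v : n - 3 <= deg e v by rewrite leqNgt hmin.
left; case: (boolP [exists a, deg e a == n - 2]) => [/existsP[a /eqP ha]|/existsPn hreg].
  exact: degree_n_minus_2 hmin ha.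
have {}hreg v : deg e v = n - 3.
  by have := hreg v; have := hmin v; have := hmax v; move=> ? ? /eqP; arith.
have N0 : 0 < N by arith.
by split; [exact: (regular_T1 hreg (Ordinal N0)) | exact: (regular_T2 hreg (Ordinal N0))].
Qed.

End UpperBound.

Theorem theorem4p2 (n i : nat) (hn : 8 <= n) (hi : (i == 1) || (i == 2)) :
  ramsey_number_is (Ti i n) (Tprime n) (2 * n - 5) /\
  ramsey_number_is (Ti i n) (Tstar n) (2 * n - 5).
Proof.
have Ti_of N (e : rel 'I_N) : contains e (T1 n) /\ contains e (T2 n) -> contains e (Ti i n).
  by case=> T1e T2e; rewrite /Ti; case: (i == 1).
have pos : 0 < 2 * n - 5 by lia.
split; (split; [exact: pos | split]).
- move=> G [sG iG]; have [/Ti_of|[]] := upper_bound hn erefl sG iG; by [left | right].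
- move=> M _ hM /(_ _ (two_cliques_simple M (n - 3))).
  by have [noTi noTp _] := lower_bound i hn hM; case.
- move=> G [sG iG]; have [/Ti_of|[]] := upper_bound hn erefl sG iG; by [left | right].
- move=> M _ hM /(_ _ (two_cliques_simple M (n - 3))).
  by have [noTi _ noTs] := lower_bound i hn hM; case.
Qed.
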